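(* Let $\boldsymbol{\mathcal{G}}=(\mathcal{V},\boldsymbol{\mathcal{E}},\mu(\cdot))$ be a stochastic digraph with vertex set $\mathbb{Z}_n$, edge sets $\mathcal{E}_1,\dots,\mathcal{E}_h$, and out-neighborhood map $H(x,w)=\{y\in\mathbb{Z}_n:(x,y)\in\mathcal{E}_w\}$, such that there is no pair $(i,w)\in\mathbb{Z}_n\times\mathbb{Z}_h$ with $\mu(\{w\})>0$ and $H(i,w)=\emptyset$. Let $L$ and $M$ be the $n\times n$ matrices with entries $$[L]_{i,j}=\sum_{s\in\{w\in\mathbb{Z}_h:\,H(i,w)=\{j\}\}}\mu(\{s\}),\qquad [M]_{i,j}=\sum_{s\in\{w\in\mathbb{Z}_h:\,H(i,w)\cap\{j\}\neq\emptyset\}}\mu(\{s\}),$$ and let $\mathcal{P}=\{P_1,\dots,P_\nu\}$ be the set of matrices constructed as follows: for each $s\in\mathbb{Z}_h$ write the digraph $(\mathbb{Z}_n,\mathcal{E}_s)$ as a union $\bigcup_{i=1}^{T_s}(\mathbb{Z}_n,\mathcal{E}_{s,i})$ of $1$-regular digraphs; for each tuple $(\mathcal{E}_{1,i_1},\dots,\mathcal{E}_{h,i_h})$ with $i_s\in\{1,\dots,T_s\}$ (there are $\nu=\prod_s T_s$ of them) let $g_s:\mathbb{Z}_n\to\mathbb{Z}_n$ be such that $(x,g_s(x))$ is the unique edge out of $x$ in $\mathcal{E}_{s,i_s}$, and define the matrix with entries $[P]_{i,j}=\sum_{s\in\{w\in\mathbb{Z}_h:\,g_w(i)=j\}}\mu(\{s\})$.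 Then $$L\ \dot{\leqslant}\ P\ \dot{\leqslant}\ M\quad\text{for all } P\in\mathcal{P},$$ where $\dot{\leqslant}$ denotes entry-wise inequality.
   Context: A stochastic digraph is a triple $\boldsymbol{\mathcal{G}}=(\mathcal{V},\boldsymbol{\mathcal{E}},\mu(\cdot))$ where $\mathcal{V}=\mathbb{Z}_n=\{1,\dots,n\}$, $\boldsymbol{\mathcal{E}}=\{\mathcal{E}_s\}_{s=1}^h$ ($h<\infty$) with $\mathcal{E}_s\subset\mathbb{Z}_n\times\mathbb{Z}_n$, and $\mu$ is the common distribution on $\mathbb{Z}_h$ of an i.i.d. sequence of random variables $\boldsymbol{w}_k$. A digraph is $1$-regular if every vertex has exactly one out-neighbor. The union of digraphs on the same vertex set is the digraph whose edge set is the union of the edge sets. *)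

From HB Require Import structures.
From mathcomp Require Import all_boot all_order all_algebra.
Set Implicit Arguments. Unset Strict Implicit. Unset Printing Implicit Defensive.
Import Order.TTheory GRing.Theory Num.Theory.
Local Open Scope ring_scope.

Definition digraph (n : nat) := {set 'I_n * 'I_n}.

Definition one_regular (n : nat) (E : digraph n) : Prop :=
  forall x : 'I_n, #|[set y | (x, y) \in E]| = 1%N.

(* mu is a probability distribution on Z_h = 'I_h (given by point masses). *)
Definition is_distribution (R : numDomainType) (h : nat) (mu : 'I_h -> R) : Prop :=
  (forall s, 0 <= mu s) /\ \sum_(s < h) mu s = 1.

Definition outH (n h : nat) (E : 'I_h -> digraph n) (x : 'I_n) (w : 'I_h) : {set 'I_n} :=
  [set y | (x, y) \in E w].

Definition matL (R : numDomainType) (n h : nat) (E : 'I_h -> digraph n) (mu : 'I_h -> R)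
  : 'M[R]_n :=
  \matrix_(i, j) \sum_(s < h | outH E i s == [set j]) mu s.

Definition matM (R : numDomainType) (n h : nat) (E : 'I_h -> digraph n) (mu : 'I_h -> R)
  : 'M[R]_n :=
  \matrix_(i, j) \sum_(s < h | outH E i s :&: [set j] != set0) mu s.

Definition matP (R : numDomainType) (n h : nat) (g : 'I_h -> 'I_n -> 'I_n) (mu : 'I_h -> R)
  : 'M[R]_n :=
  \matrix_(i, j) \sum_(s < h | g s i == j) mu s.

Definition mx_le (R : numDomainType) (m n : nat) (A B : 'M[R]_(m, n)) : Prop :=
  forall i j, A i j <= B i j.

From mathcomp Require Import all_boot all_order all_algebra.
Set Implicit Arguments. Unset Strict Implicit. Unset Printing Implicit Defensive.
Import Order.TTheory GRing.Theory Num.Theory.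
Local Open Scope ring_scope.

(* Each g_s selects, at every vertex i, an out-neighbour g_s(i) in H(i,s).
   Hence H(i,s) = {j} forces g_s(i) = j, and g_s(i) = j forces j ∈ H(i,s):
   the index sets of the three sums defining [L]_ij, [P]_ij, [M]_ij are
   nested, and the weights mu are nonnegative. *)

Lemma ler_sum_subpred (R : numDomainType) (I : Type) (r : seq I)
    (P Q : pred I) (F : I -> R) :
  (forall i, P i -> Q i) -> (forall i, Q i -> 0 <= F i) ->
  \sum_(i <- r | P i) F i <= \sum_(i <- r | Q i) F i.
Proof.
move=> PQ F_ge0; rewrite big_mkcond [leRHS]big_mkcond ler_sum // => i _.
by case: ifP => [/PQ -> | _]; [exact: lexx | case: ifP => // /F_ge0].
Qed.

Lemma mem_outH_bigcup (n h : nat) (E : 'I_h -> digraph n) (s : 'I_h)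
    (T : nat) (Es : 'I_T -> digraph n) (k : 'I_T) (x y : 'I_n) :
  \bigcup_(k < T) Es k = E s -> (x, y) \in Es k -> y \in outH E x s.
Proof.
by move=> Eunion xy_k; rewrite inE -Eunion; apply: subsetP xy_k; exact: bigcup_sup.
Qed.

Section Selection.

Variables (R : numDomainType) (n h : nat).
Variables (E : 'I_h -> digraph n) (mu : 'I_h -> R) (g : 'I_h -> 'I_n -> 'I_n).
Hypothesis mu_ge0 : forall s, 0 <= mu s.
Hypothesis g_outH : forall s x, g s x \in outH E x s.

Lemma matL_le_matP : mx_le (matL E mu) (matP g mu).
Proof.
move=> i j; rewrite !mxE; apply: ler_sum_subpred => // s /eqP outH_j.
by have := g_outH s i; rewrite outH_j inE.
Qed.

Lemma matP_le_matM : mx_le (matP g mu) (matM E mu).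
Proof.
move=> i j; rewrite !mxE; apply: ler_sum_subpred => // s /eqP gsi.
by apply/set0Pn; exists j; rewrite inE -{1}gsi g_outH set11.
Qed.

End Selection.

Theorem corollary1 (R : realFieldType) (n h : nat)
  (E : 'I_h -> digraph n) (mu : 'I_h -> R)
  (Hmu : is_distribution mu)
  (Hnz : ~ (exists (i : 'I_n) (w : 'I_h), 0 < mu w /\ outH E i w = set0))
  (T : 'I_h -> nat)
  (Es : forall s : 'I_h, 'I_(T s) -> digraph n)
  (Hreg : forall s (k : 'I_(T s)), one_regular (Es s k))
  (Hunion : forall s, \bigcup_(k < T s) Es s k = E s) :
  forall (idx : forall s : 'I_h, 'I_(T s)) (g : 'I_h -> 'I_n -> 'I_n),
    (forall s x, (x, g s x) \in Es s (idx s)) ->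
    mx_le (matL E mu) (matP g mu) /\ mx_le (matP g mu) (matM E mu).
Proof.
move=> idx g g_edge.
have [mu_ge0 _] := Hmu.
have g_outH s x : g s x \in outH E x s := mem_outH_bigcup (Hunion s) (g_edge s x).
by split; [exact: matL_le_matP | exact: matP_le_matM].
Qed.
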